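(* Let $V$ be a reflexive Banach space, $1<p<\infty$, and let $W$ be a Banach space compactly embedded in $V$. If $g\in L^p_b(\mathbb R,W)$, then $g$ is space regular as a function in $L^p_b(\mathbb R,V)$.
   Context: $L^p_b(\mathbb R,X)$ has norm $\sup_{s\in\mathbb R}\|g\|_{L^p((s,s+1),X)}$. A function $g\in L^p_b(\mathbb R,V)$ is space regular if for every $\varepsilon>0$ there exist a finite-dimensional subspace $V_\varepsilon\subset V$ and $g_\varepsilon\in L^p_b(\mathbb R,V_\varepsilon)$ with $\|g-g_\varepsilon\|_{L^p_b(\mathbb R,V)}\le\varepsilon$. *)

From HB Require Import structures.
From mathcomp Require Import all_boot all_order all_algebra.
From mathcomp Require Import all_classical all_reals all_analysis.
Set Implicit Arguments. Unset Strict Implicit. Unset Printing Implicit Defensive.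
Import Order.TTheory GRing.Theory Num.Theory.
Import numFieldNormedType.Exports.
Local Open Scope classical_set_scope.
Local Open Scope ring_scope.

Definition simple_fun {R : realType} {X : normedModType R} (f : R -> X) : Prop :=
  (exists vs : seq X, forall t, f t \in vs) /\
  (forall v : X, measurable (f @^-1` [set v])).

Definition strongly_measurable {R : realType} {X : normedModType R} (f : R -> X) : Prop :=
  exists s : nat -> R -> X, (forall n, simple_fun (s n)) /\
    {ae (@lebesgue_measure R), forall t, s n t @[n --> \oo] --> f t}.

Definition Lp_local_norm {R : realType} {X : normedModType R} (p : R) (f : R -> X) (s : R)
  : \bar R :=
  ((\int[@lebesgue_measure R]_(t in `]s, (s + 1)%R[) ((`|f t| `^ p)%:E)) `^ p^-1)%E.

Definition Lpb_norm {R : realType} {X : normedModType R} (p : R) (f : R -> X) : \bar R :=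
  ereal_sup (range (Lp_local_norm p f)).

Definition in_Lpb {R : realType} {X : normedModType R} (p : R) (f : R -> X) : Prop :=
  strongly_measurable f /\ (Lpb_norm p f < +oo)%E.

Definition in_span {R : realType} {X : normedModType R} (vs : seq X) (x : X) : Prop :=
  exists c : nat -> R, x = \sum_(k < size vs) c k *: vs`_k.

Definition space_regular {R : realType} {V : normedModType R} (p : R) (g : R -> V) : Prop :=
  forall eps : R, 0 < eps ->
    exists (vs : seq V) (ge : R -> V),
      (forall t, in_span vs (ge t)) /\ in_Lpb p ge /\
      (Lpb_norm p (fun t => (g t - ge t)%R) <= eps%:E)%E.

(* Reflexivity: every bounded linear functional on the dual V' (with the
   operator norm) is evaluation at some point of V. *)
Definition cont_lin_functional {R : realType} {V : normedModType R} (f : V -> R) : Prop :=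
  (forall (a : R) (x y : V), f (a *: x + y) = a * f x + f y) /\ continuous f.

Definition reflexive_space (R : realType) (V : normedModType R) : Prop :=
  forall Phi : (V -> R) -> R,
    (forall (a : R) (f h : V -> R), cont_lin_functional f -> cont_lin_functional h ->
        Phi (fun v => a * f v + h v) = a * Phi f + Phi h) ->
    (exists C : R, forall (f : V -> R) (M : R), cont_lin_functional f ->
        (forall v, `|f v| <= M * `|v|) -> `|Phi f| <= C * M) ->
    exists v : V, forall f, cont_lin_functional f -> Phi f = f v.

Definition compact_embedding {R : realType} {W V : normedModType R} (i : W -> V) : Prop :=
  (forall (a : R) (x y : W), i (a *: x + y) = a *: i x + i y) /\
  injective i /\ continuous i /\
  compact (closure (i @` [set w : W | `|w| <= 1])).

(* The image K of the unit ball of W is relatively compact in V, so it has a finite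
   e-net v_1, ..., v_m.  A partition of unity subordinate to the balls around the v_k,
   made positively homogeneous, yields a continuous map sigma : W -> V with values in
   span(v_1, ..., v_m), |sigma w| <= C |w| and |i w - sigma w| <= e |w|.  Then sigma o g
   is strongly measurable, lies in L^p_b, and is within e |g|_{L^p_b(W)} of i o g. *)
From HB Require Import structures.
From mathcomp Require Import all_boot all_order all_algebra.
From mathcomp Require Import all_classical all_reals all_analysis.
Set Implicit Arguments. Unset Strict Implicit. Unset Printing Implicit Defensive.
Import Order.TTheory GRing.Theory Num.Theory.
Import numFieldNormedType.Exports.
Local Open Scope classical_set_scope.
Local Open Scope ring_scope.

Lemma compact_finite_net (R : realType) (V : normedModType R) (K : set V) (e : R) :
  0 < e -> compact K ->
  exists vs : seq V, forall x, K x -> exists2 v, v \in vs & `|x - v| < e.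
Proof.
move=> e0; rewrite compact_cover => cK.
have [|x Kx|D _ cov] := cK V K (fun v => ball v e).
- by move=> v _; exact: ball_open.
- by exists x => //; exact: ballxx.
exists (finmap.enum_fset D) => x /cov [v /= vD xv]; exists v => //.
by move: xv; rewrite -ball_normE /ball_ /= distrC.
Qed.

Section NetApproximation.
Variables (R : realType) (W V : normedModType R) (i : W -> V).
Hypothesis i_linear : forall a x y, i (a *: x + y) = a *: i x + i y.
Hypothesis i_continuous : continuous i.
Variables (vs : seq V) (e : R).
Hypothesis e_gt0 : 0 < e.
Hypothesis vs_net : forall w, `|w| <= 1 -> exists2 v, v \in vs & `|i w - v| < e.

Lemma i0 : i 0 = 0.
Proof.
have := i_linear 1 0 0; rewrite !scale1r addr0 => i00.
by apply: (@addrI _ (i 0)); rewrite addr0 -i00.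
Qed.

Lemma iZ a x : i (a *: x) = a *: i x.
Proof. by have := i_linear a x 0; rewrite !addr0 i0 addr0. Qed.

(* [net_weight k] vanishes outside the cone over the ball of radius 2e around v_k. *)
Definition net_weight k w := Order.max 0 (2 * e * `|w| - `|i w - `|w| *: vs`_k|).
Definition net_weight_sum w := \sum_(k < size vs) net_weight k w.
Definition net_coef k w :=
  if net_weight_sum w == 0 then 0 else net_weight k w * `|w| / net_weight_sum w.
Definition net_approx w := \sum_(k < size vs) net_coef k w *: vs`_k.

Lemma net_weight_ge0 k w : 0 <= net_weight k w.
Proof. by rewrite le_max lexx. Qed.

Lemma net_weight_sum_ge0 w : 0 <= net_weight_sum w.
Proof. by apply: sumr_ge0 => k _; exact: net_weight_ge0. Qed.

Lemma net_weight_le_sum (k : 'I_(size vs)) w : net_weight k w <= net_weight_sum w.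
Proof.
rewrite /net_weight_sum (bigD1 k) //= lerDl.
by apply: sumr_ge0 => j _; exact: net_weight_ge0.
Qed.

Lemma net_weight_sum_gt0 w : w != 0 -> 0 < net_weight_sum w.
Proof.
move=> w0; have nw_gt0 : 0 < `|w| by rewrite normr_gt0.
have [|v vin] := vs_net (w := `|w|^-1 *: w).
  by rewrite normrZ normrV ?unitfE ?normr_eq0 // normr_id mulVf // gt_eqF.
rewrite iZ => close_v.
have kv : (index v vs < size vs)%N by rewrite index_mem.
apply: lt_le_trans (net_weight_le_sum (Ordinal kv) w).
rewrite /net_weight /= nth_index // lt_max subr_gt0; apply/orP; right.
have -> : i w - `|w| *: v = `|w| *: (`|w|^-1 *: i w - v).
  by rewrite scalerBr scalerA divff ?gt_eqF // scale1r.
rewrite normrZ normr_id mulrC ltr_pM2r //.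
by apply: lt_le_trans close_v _; rewrite ler_peMl ?(ltW e_gt0) ?ler1n.
Qed.

Lemma net_weight_mul_dist k w :
  net_weight k w * `|i w - `|w| *: vs`_k| <= net_weight k w * (2 * e * `|w|).
Proof.
rewrite /net_weight; set a := 2 * e * `|w| - _.
have [_|a_gt0] := leP a 0; first by rewrite !mul0r.
by apply: ler_wpM2l; apply: ltW; rewrite // -subr_gt0.
Qed.

Lemma net_coef_ge0 k w : 0 <= net_coef k w.
Proof.
rewrite /net_coef; case: eqP => // _.
by rewrite divr_ge0 ?mulr_ge0 ?net_weight_ge0 ?net_weight_sum_ge0.
Qed.

Lemma net_coef_le_norm (k : 'I_(size vs)) w : net_coef k w <= `|w|.
Proof.
rewrite /net_coef; case: eqP => [//|/eqP D0].
have D_gt0 : 0 < net_weight_sum w by rewrite lt_def D0 net_weight_sum_ge0.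
by rewrite ler_pdivrMr // mulrC ler_wpM2l ?net_weight_le_sum.
Qed.

Lemma net_coef0 (k : 'I_(size vs)) : net_coef k 0 = 0.
Proof.
by apply/eqP; rewrite eq_le net_coef_ge0 andbT -(normr0 W) net_coef_le_norm.
Qed.

(* i w - sigma w is a convex combination of the vectors i w - |w| v_k with nonzero weight. *)
Lemma norm_sub_net_approx w : `|i w - net_approx w| <= 2 * e * `|w|.
Proof.
have [->|w0] := eqVneq w 0.
  by rewrite i0 /net_approx big1 ?subr0 ?normr0 ?mulr0 // => k _; rewrite net_coef0 scale0r.
have D_gt0 := net_weight_sum_gt0 w0; set D := net_weight_sum w in D_gt0 *.
have -> : i w - net_approx w =
    \sum_(k < size vs) (net_weight k w / D) *: (i w - `|w| *: vs`_k).
  rewrite -[i w in LHS]scale1r -(divff (lt0r_neq0 D_gt0)) {1}/D /net_weight_sum.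
  rewrite mulr_suml scaler_suml -sumrB; apply: eq_bigr => k _.
  by rewrite /net_coef gt_eqF // scalerBr scalerA mulrAC.
apply: le_trans (ler_norm_sum _ _ _) _.
apply: (le_trans (y := \sum_(k < size vs) net_weight k w / D * (2 * e * `|w|))).
  apply: ler_sum => k _.
  rewrite normrZ ger0_norm ?divr_ge0 ?net_weight_ge0 ?(ltW D_gt0) //.
  by rewrite mulrAC [leRHS]mulrAC ler_wpM2r ?invr_ge0 ?(ltW D_gt0) ?net_weight_mul_dist.
by rewrite -!mulr_suml divff ?gt_eqF // mul1r.
Qed.

Lemma norm_net_approx_le w : `|net_approx w| <= (\sum_(k < size vs) `|vs`_k|) * `|w|.
Proof.
apply: le_trans (ler_norm_sum _ _ _) _; rewrite mulr_suml; apply: ler_sum => k _.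
by rewrite normrZ ger0_norm ?net_coef_ge0 // mulrC ler_wpM2l ?net_coef_le_norm.
Qed.

Lemma net_weight_continuous k : continuous (net_weight k).
Proof.
move=> w; apply: (@continuous_max R W (cst 0)
  (fun w => 2 * e * `|w| - `|i w - `|w| *: vs`_k|)); first exact: cvg_cst.
apply: continuousB.
  by apply: continuousM; [exact: cvg_cst | exact: norm_continuous].
apply: (continuous_comp (f := i - (fun w => `|w| *: vs`_k))); last exact: norm_continuous.
apply: continuousB; first exact: i_continuous.
by apply: continuousZ; [exact: norm_continuous | exact: cvg_cst].
Qed.

Lemma net_weight_sum_continuous : continuous net_weight_sum.
Proof.
apply: continuous_big; first exact: add_continuous.
by move=> k _; exact: net_weight_continuous.
Qed.

Lemma net_coef_continuous (k : 'I_(size vs)) : continuous (net_coef k).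
Proof.
move=> w; have [->|w0] := eqVneq w 0.
  rewrite /continuous_at net_coef0; apply/cvgrPdist_lt => eps eps_gt0.
  near=> y; rewrite sub0r normrN ger0_norm ?net_coef_ge0 //.
  apply: le_lt_trans (net_coef_le_norm k y) _; near: y; exact: nbhs0_lt.
have near_coef : {near w, (fun y => net_weight k y * `|y| / net_weight_sum y) =1 net_coef k}.
  have : open [set y : W | y != 0].
    rewrite (_ : [set y | y != 0] = (fun y : W => `|y|) @^-1` [set r : R | r != 0]).
      by apply: open_comp => [y _|]; [exact: norm_continuous | exact: open_neq].
    by apply/seteqP; split => y /=; rewrite normr_eq0.
  move=> nz_open; apply: filterS (open_nbhs_nbhs (conj nz_open w0)) => y y0.
  by rewrite /net_coef gt_eqF // net_weight_sum_gt0.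
rewrite /continuous_at {2}/net_coef gt_eqF ?net_weight_sum_gt0 //.
apply: cvg_trans (near_eq_cvg near_coef) _.
apply: cvgM; first by apply: cvgM; [exact: net_weight_continuous | exact: norm_continuous].
by apply: cvgV; [rewrite gt_eqF ?net_weight_sum_gt0 | exact: net_weight_sum_continuous].
Unshelve. all: by end_near.
Qed.

Lemma net_approx_continuous : continuous net_approx.
Proof.
apply: continuous_big; first exact: add_continuous.
by move=> k _ w; apply: continuousZ; [exact: net_coef_continuous | exact: cvg_cst].
Qed.

End NetApproximation.

Lemma compact_embedding_approx (R : realType) (W V : normedModType R) (i : W -> V) (e : R) :
  compact_embedding i -> 0 < e ->
  exists (vs : seq V) (sigma : W -> V) (C : R),
    [/\ continuous sigma, forall w, in_span vs (sigma w), 0 < C,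
        forall w, `|sigma w| <= C * `|w| & forall w, `|i w - sigma w| <= e * `|w|].
Proof.
move=> [i_linear [_ [i_continuous ball_compact]]] e_gt0.
have e2_gt0 : 0 < e / 2 by rewrite divr_gt0.
have [vs vs_net] := compact_finite_net e2_gt0 ball_compact.
have {}vs_net w : `|w| <= 1 -> exists2 v, v \in vs & `|i w - v| < e / 2.
  by move=> w1; apply: vs_net; apply: subset_closure; exists w.
exists vs, (net_approx i vs (e / 2)), (\sum_(k < size vs) `|vs`_k| + 1); split.
- exact: (net_approx_continuous i_linear i_continuous e2_gt0 vs_net).
- by move=> w; exists (fun k => net_coef i vs (e / 2) k w).
- by rewrite ltr_wpDl // sumr_ge0.
- move=> w; apply: le_trans (norm_net_approx_le i vs (e / 2) w) _.
  by rewrite ler_wpM2r // lerDl.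
- move=> w; have := norm_sub_net_approx i_linear e2_gt0 vs_net w.
  by rewrite mulrCA divff ?mulr1 // pnatr_eq0.
Qed.

(* The nonnegative integral is a supremum over simple functions below the integrand,
   so monotonicity and pulling out a constant hold without any measurability. *)
Section NonnegativeIntegral.
Local Open Scope ereal_scope.
Import HBNNSimple.
Context d (T : measurableType d) (R : realType).
Variable mu : {measure set T -> \bar R}.

Lemma ge0_le_integral_nonmeas (D : set T) (f h : T -> \bar R) :
  (forall x, D x -> 0 <= f x) -> (forall x, D x -> f x <= h x) ->
  \int[mu]_(x in D) f x <= \int[mu]_(x in D) h x.
Proof.
move=> f_ge0 fh; have h_ge0 x : D x -> 0 <= h x.
  by move=> Dx; exact: le_trans (f_ge0 _ Dx) (fh _ Dx).
rewrite !ge0_integralE //; apply: ereal_sup_le => _ [k kf <-]; exists k => //= x.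
apply: le_trans (kf x) _; rewrite /patch; case: ifP => // /set_mem Dx; exact: fh.
Qed.

Lemma ge0_integralZl_le_nonmeas (D : set T) (f : T -> \bar R) (c : R) : (0 < c)%R ->
  (forall x, D x -> 0 <= f x) ->
  \int[mu]_(x in D) (c%:E * f x) <= c%:E * \int[mu]_(x in D) f x.
Proof.
move=> c_gt0 f_ge0; have cf_ge0 x : D x -> 0 <= c%:E * f x.
  by move=> Dx; rewrite mule_ge0 ?lee_fin ?(ltW c_gt0) ?f_ge0.
rewrite !ge0_integralE //; apply: ge_ereal_sup => _ [k kf <-].
have cV_ge0 : (0 <= c^-1)%R by rewrite invr_ge0 ltW.
pose k' := scale_nnsfun k cV_ge0.
have -> : sintegral mu k = c%:E * sintegral mu k'.
  rewrite (_ : sintegral mu k' = sintegral mu (cst c^-1 \* k)%R) //.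
  by rewrite sintegralrM muleA -EFinM divff ?gt_eqF // mul1e.
apply: lee_wpmul2l; first by rewrite lee_fin ltW.
apply: ereal_sup_ubound; exists k' => // x /=.
have := kf x; rewrite /patch; case: ifP => _ kfx.
  rewrite -[f x]mul1e -(mulVf (lt0r_neq0 c_gt0)) (EFinM c^-1 c) -muleA EFinM.
  by apply: lee_wpmul2l; rewrite ?lee_fin.
by rewrite lee_fin pmulr_rle0 ?invr_gt0 // -lee_fin.
Qed.

End NonnegativeIntegral.

Section NormComparison.
Local Open Scope ereal_scope.
Context (R : realType) (X1 X2 : normedModType R) (p c : R) (f1 : R -> X1) (f2 : R -> X2).
Hypotheses (p_gt0 : (0 < p)%R) (c_gt0 : (0 < c)%R).
Hypothesis f1_le : forall t, (`|f1 t| <= c * `|f2 t|)%R.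

Lemma le_Lp_local_norm s : Lp_local_norm p f1 s <= c%:E * Lp_local_norm p f2 s.
Proof.
rewrite /Lp_local_norm; set I1 := integral _ _ _; set I2 := integral _ _ _.
have I1_ge0 : 0 <= I1 by apply: integral_ge0 => t _; rewrite lee_fin powR_ge0.
have I2_ge0 : 0 <= I2 by apply: integral_ge0 => t _; rewrite lee_fin powR_ge0.
have I1_le : I1 <= (c `^ p)%:E * I2.
  apply: le_trans (ge0_integralZl_le_nonmeas _ (powR_gt0 p c_gt0) _); last first.
    by move=> t _; rewrite lee_fin powR_ge0.
  apply: ge0_le_integral_nonmeas => t _; first by rewrite lee_fin powR_ge0.
  rewrite -EFinM lee_fin -powRM ?(ltW c_gt0) //.
  by apply: (ge0_ler_powR (ltW p_gt0)); rewrite ?nnegrE ?mulr_ge0 ?(ltW c_gt0).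
apply: le_trans (gt0_ler_poweR _ _ _ I1_le) _.
- by rewrite invr_ge0 ltW.
- by rewrite in_itv /= I1_ge0 leey.
- by rewrite in_itv /= leey andbT mule_ge0 // lee_fin powR_ge0.
rewrite poweRM ?lee_fin ?powR_ge0 // poweR_EFin -powRrM divff ?gt_eqF //.
by rewrite powRr1 // ltW.
Qed.

Lemma le_Lpb_norm : Lpb_norm p f1 <= c%:E * Lpb_norm p f2.
Proof.
apply: ge_ereal_sup => _ [s _ <-]; apply: le_trans (le_Lp_local_norm s) _.
apply: lee_wpmul2l; first by rewrite lee_fin ltW.
by apply: ereal_sup_ubound; exists s.
Qed.

End NormComparison.

Lemma simple_fun_comp (R : realType) (X Y : normedModType R) (s : R -> X) (f : X -> Y) :
  simple_fun s -> simple_fun (f \o s).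
Proof.
move=> [[vs s_vs] s_meas]; split; first by exists (map f vs) => t; rewrite /= map_f.
move=> v; have -> : (f \o s) @^-1` [set v] =
    \big[setU/set0]_(x <- vs | f x == v) s @^-1` [set x].
  rewrite -bigcup_seq_cond; apply/seteqP; split => t /=.
    by move=> fst; exists (s t); rewrite //= s_vs fst eqxx.
  by case=> x /andP[_ /eqP <-] ->.
by apply: bigsetU_measurable => x _; exact: s_meas.
Qed.

Lemma strongly_measurable_comp (R : realType) (X Y : normedModType R)
    (g : R -> X) (f : X -> Y) :
  continuous f -> strongly_measurable g -> strongly_measurable (f \o g).
Proof.
move=> f_cont [s [s_simple s_cvg]]; exists (fun n => f \o s n); split.
  by move=> n; exact: simple_fun_comp.
have ae_filter := ae_filter_ringOfSetsType (@lebesgue_measure R).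
apply: filterS s_cvg => t /= cvg_t; exact: continuous_cvg (f_cont (g t)) cvg_t.
Qed.

Lemma Lpb_norm_ge0 (R : realType) (X : normedModType R) (p : R) (f : R -> X) :
  (0 <= Lpb_norm p f)%E.
Proof. by apply: le_trans (poweR_ge0 _ _) _; apply: ereal_sup_ubound; exists 0. Qed.

Lemma in_Lpb_comp (R : realType) (W V : normedModType R) (p C : R)
    (f : W -> V) (g : R -> W) :
  0 < p -> 0 < C -> continuous f -> (forall w, `|f w| <= C * `|w|) ->
  in_Lpb p g -> in_Lpb p (f \o g).
Proof.
move=> p_gt0 C_gt0 f_cont f_le [g_meas g_fin]; split.
  exact: strongly_measurable_comp g_meas.
apply: le_lt_trans (le_Lpb_norm p_gt0 C_gt0 (fun t => f_le (g t))) _.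
by rewrite lte_mul_pinfty ?lee_fin ?ltW // ge0_fin_numE ?Lpb_norm_ge0.
Qed.

Unset Implicit Arguments.
Theorem proposition2p3 (R : realType)
  (V : completeNormedModType R) (W : completeNormedModType R)
  (p : R) (i : W -> V) (g : R -> W) :
  reflexive_space V -> 1 < p -> compact_embedding i ->
  in_Lpb p g ->
  space_regular p (i \o g).
Proof.
move=> _ p_gt1 i_compact g_Lpb eps eps_gt0.
have p_gt0 : 0 < p by apply: lt_trans p_gt1.
set N := fine (Lpb_norm p g).
have N_ge0 : 0 <= N by rewrite fine_ge0 ?Lpb_norm_ge0.
have gN : Lpb_norm p g = N%:E.
  by rewrite fineK // ge0_fin_numE ?Lpb_norm_ge0 ?g_Lpb.2.
have e_gt0 : 0 < eps / (N + 1) by rewrite divr_gt0 // ltr_wpDl.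
have [vs [sigma [C [sigma_cont sigma_span C_gt0 sigma_le sigma_err]]]] :=
  compact_embedding_approx i_compact e_gt0.
exists vs, (sigma \o g); split; first by move=> t; exact: sigma_span.
split; first exact: (in_Lpb_comp p_gt0 C_gt0 sigma_cont sigma_le g_Lpb).
apply: le_trans (le_Lpb_norm p_gt0 e_gt0 (fun t => sigma_err (g t))) _.
rewrite gN -EFinM lee_fin mulrAC ler_pdivrMr ?ltr_wpDl //.
by rewrite ler_wpM2l ?(ltW eps_gt0) // lerDl.
Qed.
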